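(* Let $c_2,e_3,d_4$ be general homogeneous polynomials in $(u,v)$ of degrees $2,3,4$. The quartic surface $$\mathcal{K}\colon\ (w^2-uv)\,y^2 = c_2(u,v)w^2 + e_3(u,v)w + d_4(u,v)$$ in $\mathbb{P}^3=\mathbb{P}(u,v,w,y)$ has two rational double point singularities of type $\mathbf{A}_1$, at $\mathrm{p}_1=[0:0:0:1]$ and $\mathrm{p}_2=[0:0:1:0]$. *)

From HB Require Import structures.
From mathcomp Require Import all_boot all_order all_algebra.
From mathcomp Require Import mpoly.
Set Implicit Arguments. Unset Strict Implicit. Unset Printing Implicit Defensive.
Import GRing.Theory.
Local Open Scope ring_scope.

Definition U_ {F : fieldType} : {mpoly F[4]} := 'X_(inord 0).
Definition V_ {F : fieldType} : {mpoly F[4]} := 'X_(inord 1).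
Definition W_ {F : fieldType} : {mpoly F[4]} := 'X_(inord 2).
Definition Y_ {F : fieldType} : {mpoly F[4]} := 'X_(inord 3).

(* The 12 coefficients of (c_2, e_3, d_4) are a : 'I_12 -> F:
   c_2 = sum_{k<=2} a_k u^k v^(2-k),
   e_3 = sum_{k<=3} a_(3+k) u^k v^(3-k),
   d_4 = sum_{k<=4} a_(7+k) u^k v^(4-k). *)
Definition binform {F : fieldType} (a : 'I_12 -> F) (off deg : nat) : {mpoly F[4]} :=
  \sum_(k < deg.+1) (a (inord (off + k)))%:MP * U_ ^+ k * V_ ^+ (deg - k).

Definition c2 {F : fieldType} (a : 'I_12 -> F) := binform a 0 2.
Definition e3 {F : fieldType} (a : 'I_12 -> F) := binform a 3 3.
Definition d4 {F : fieldType} (a : 'I_12 -> F) := binform a 7 4.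

Definition Kpoly {F : fieldType} (a : 'I_12 -> F) : {mpoly F[4]} :=
  (W_ ^+ 2 - U_ * V_) * Y_ ^+ 2 - (c2 a * W_ ^+ 2 + e3 a * W_ + d4 a).

(* A point of P^3 is represented by a nonzero vector p : 'I_4 -> F. *)
Definition nonzero_vec {F : fieldType} (p : 'I_4 -> F) := exists i, p i != 0.

Definition same_proj_point {F : fieldType} (p q : 'I_4 -> F) :=
  exists2 l : F, l != 0 & forall i, p i = l * q i.

Definition singular_point {F : fieldType} (G : {mpoly F[4]}) (p : 'I_4 -> F) :=
  nonzero_vec p /\ meval p G = 0 /\ forall i, meval p (mderiv i G) = 0.

(* Rational double point of type A_1 (ordinary node): p is singular and, in an
   affine chart x_i = 1 containing p, the Hessian of the dehomogenized local
   equation at (the representative of) p is nondegenerate.  The second partial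
   derivatives of the dehomogenization in the chart variables x_j (j <> i)
   are the d_j d_k G evaluated at p / p_i. *)
Definition A1_point {F : fieldType} (G : {mpoly F[4]}) (p : 'I_4 -> F) :=
  singular_point G p /\
  exists i : 'I_4, p i != 0 /\
    let q := fun j => p j / p i in
    let H := \matrix_(j < 3, k < 3)
               meval q (mderiv (lift i k) (mderiv (lift i j) G)) in
    \det H != 0.

Definition p1 {F : fieldType} : 'I_4 -> F := fun i => if val i == 3%N then 1 else 0.
Definition p2 {F : fieldType} : 'I_4 -> F := fun i => if val i == 2%N then 1 else 0.

From HB Require Import structures.
From mathcomp Require Import all_boot all_order all_algebra.
From mathcomp Require Import mpoly ring zify.

Set Implicit Arguments.
Unset Strict Implicit.
Unset Printing Implicit Defensive.

Import GRing.Theory.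
Local Open Scope ring_scope.

Section PolySize.
Variable R : nzRingType.
Implicit Types p q : {poly R}.

Lemma leq_size_mul p q m n :
  (size p <= m.+1)%N -> (size q <= n.+1)%N -> (size (p * q)%R <= (m + n).+1)%N.
Proof.
by move=> sp sq; apply: leq_trans (size_polyMleq p q) _; lia.
Qed.

Lemma coefM_sizes p q m n : (size p <= m.+1)%N -> (size q <= n.+1)%N ->
  (p * q)`_(m + n) = p`_m * q`_n.
Proof.
move=> sp sq; have m_lt : (m < (m + n).+1)%N by rewrite ltnS leq_addr.
rewrite coefM (bigD1 (Ordinal m_lt)) //= addKn big1 ?addr0 // => -[i /= i_lt] ne_im.
have [i_lt_m | i_gt_m] := ltnP i m.
  by rewrite [q`__]nth_default ?mulr0 // (leq_trans sq) //; lia.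
rewrite nth_default ?mul0r // (leq_trans sp) //.
by move: ne_im; rewrite -val_eqE /=; lia.
Qed.

Lemma size_Mn_leq p k : (size (p *+ k)%R <= size p)%N.
Proof. by apply/leq_sizeP => j j_ge; rewrite coefMn nth_default ?mul0rn. Qed.

Lemma size_deriv_leq p n : (size p <= n.+1)%N -> (size p^`() <= n)%N.
Proof.
have [-> _|p_nz sp] := eqVneq p 0; first by rewrite deriv0 size_poly0.
by rewrite -ltnS (leq_trans (lt_size_deriv p_nz)).
Qed.

Lemma size_comp_Xn_leq p n k :
  (size p <= n.+1)%N -> (size (p \Po 'X^k) <= (n * k).+1)%N.
Proof.
move=> sp; apply: leq_trans (size_comp_poly_leq _ _) _.
by rewrite size_polyXn ltnS leq_mul2r; apply/orP; right; lia.
Qed.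

Lemma lead_coef_size p n : (size p <= n.+1)%N -> p`_n != 0 -> lead_coef p = p`_n.
Proof.
move=> sp pn_nz; rewrite lead_coefE; suff -> : size p = n.+1 by [].
by apply/eqP; rewrite eqn_leq sp ltnNge; apply: contra pn_nz => ?; rewrite nth_default.
Qed.
Lemma lt_size_coef p n : p`_n != 0 -> (n < size p)%N.
Proof. by apply: contraR; rewrite -leqNgt => ?; rewrite nth_default. Qed.

End PolySize.


Lemma rmorph_resultant (aR rR : comNzRingType) (f : {rmorphism aR -> rR})
    (p q : {poly aR}) :
    f (lead_coef p) != 0 -> f (lead_coef q) != 0 ->
  f (resultant p q) = resultant (map_poly f p) (map_poly f q).
Proof.
move=> nz_fp nz_fq; rewrite /resultant /Sylvester_mx !size_map_poly_id0 //.
rewrite -det_map_mx /= map_col_mx; congr (\det (col_mx _ _));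
  by apply: map_lin1_mx => v; rewrite map_poly_rV rmorphM /= map_rVpoly.
Qed.

Lemma rmorph_resultant_eq0 (aR rR : comNzRingType) (f : {rmorphism aR -> rR})
    (p q : {poly aR}) x :
    (1 < size p)%N -> (1 < size q)%N -> root (map_poly f p) x -> root (map_poly f q) x ->
  f (resultant p q) = 0.
Proof.
move=> p_gt1 q_gt1 /eqP px0 /eqP qx0.
have [[u v] _ /= /(congr1 (fun r => (map_poly f r).[x]))] := resultant_in_ideal p_gt1 q_gt1.
by rewrite map_polyC hornerC rmorphD !rmorphM /= hornerD !hornerM px0 qx0 !mulr0 addr0.
Qed.

Lemma resultant_neq0 (K : closedFieldType) (p q : {poly K}) :
  (forall x, root p x -> ~~ root q x) -> resultant p q != 0.
Proof.
move=> no_common_root; rewrite resultant_eq0; apply/negP.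
move=> /gtn_eqF/negbT/closed_rootP[x]; rewrite root_gcd => /andP[px qx].
by rewrite (negPf (no_common_root x px)) in qx.
Qed.

Lemma XnDC_no_double_root (F : fieldType) n (c x : F) :
  n%:R != 0 :> F -> c != 0 -> root ('X^n + c%:P) x -> ~~ root ('X^n + c%:P)^`() x.
Proof.
move=> n_neq0 c_neq0; rewrite /root derivD derivXn derivC addr0 hornerD hornerXn hornerC.
rewrite hornerMn hornerXn -mulr_natr mulf_eq0 (negPf n_neq0) orbF expf_eq0 => x_root.
apply/negP => /andP[_ /eqP x0]; move: x_root; rewrite x0 expr0n.
by case: n n_neq0 => [|n] /=; rewrite ?eqxx // add0r (negPf c_neq0).
Qed.

Lemma resultant_coef_neq0 (R : comNzRingType) (K : closedFieldType)
    (f : {rmorphism R -> K}) (p q : {poly R}) m n :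
    (size p <= m.+1)%N -> (size q <= n.+1)%N -> f p`_m != 0 -> f q`_n != 0 ->
    (forall x, root (map_poly f p) x -> ~~ root (map_poly f q) x) ->
  resultant p q != 0.
Proof.
move=> sp sq fp fq no_common_root.
have coef_neq0 r : f r != 0 -> r != 0 by apply: contraNneq => ->; rewrite rmorph0.
have ffp : f (lead_coef p) != 0 by rewrite (lead_coef_size sp) ?coef_neq0.
have ffq : f (lead_coef q) != 0 by rewrite (lead_coef_size sq) ?coef_neq0.
apply: contraNneq (resultant_neq0 no_common_root) => res0.
by rewrite -rmorph_resultant // res0 rmorph0.
Qed.

Lemma coef_root_resultant (R : comNzRingType) (K : comNzRingType)
    (f : {rmorphism R -> K}) (p q : {poly R}) m n x :
    (0 < m)%N -> (0 < n)%N -> f p`_m != 0 -> f q`_n != 0 ->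
    f (resultant p q) != 0 -> root (map_poly f p) x -> ~~ root (map_poly f q) x.
Proof.
move=> m_gt0 n_gt0 fp fq fres px; apply: contra fres => qx.
have coef_neq0 r : f r != 0 -> r != 0 by apply: contraNneq => ->; rewrite rmorph0.
apply/eqP; apply: rmorph_resultant_eq0 px qx.
  exact: leq_trans (lt_size_coef (coef_neq0 _ fp)).
exact: leq_trans (lt_size_coef (coef_neq0 _ fq)).
Qed.


Section QuadraticFamily.
Variables (R : comNzRingType) (C E D : {poly R}).

Definition quad_disc := E * E - C * D *+ 4.

Definition conic_poly := (C \Po 'X^2) * 'X^2 + (E \Po 'X^2) * 'X + (D \Po 'X^2).

Lemma quad_disc_eq0 (c e d w : R) :
  c * w ^+ 2 + e * w + d = 0 -> c * w *+ 2 + e = 0 -> e * e - c * d *+ 4 = 0.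
Proof.
move=> f0 fw0; transitivity ((c * w *+ 2 + e) ^+ 2 - c * (c * w ^+ 2 + e * w + d) *+ 4).
  by ring.
by rewrite f0 fw0; ring.
Qed.

Lemma sing_wy_quad_disc (c e d w y : R) :
  w ^+ 2 * y ^+ 2 = c * w ^+ 2 + e * w + d -> w * y ^+ 2 *+ 2 = c * w *+ 2 + e ->
  w = 0 \/ y = 0 -> e * e - c * d *+ 4 = 0 \/ d = 0.
Proof.
move=> f0 fw0 [w0 | y0]; [right | left].
  transitivity (c * w ^+ 2 + e * w + d); first by rewrite w0; ring.
  by rewrite -f0 w0; ring.
by apply: (quad_disc_eq0 (w := w)); [rewrite -f0 | rewrite -fw0]; rewrite y0; ring.
Qed.

Lemma quad_disc_double_root t s :
  C.[t] * s ^+ 2 + E.[t] * s + D.[t] = 0 ->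
  C.[t] * s *+ 2 + E.[t] = 0 ->
  C^`().[t] * s ^+ 2 + E^`().[t] * s + D^`().[t] = 0 ->
  root quad_disc t /\ root quad_disc^`() t.
Proof.
move=> f0 fs0 ft0; rewrite /root /quad_disc !derivE !(hornerD, hornerN, hornerM, hornerMn).
split; apply/eqP; first exact: quad_disc_eq0 f0 fs0.
transitivity ((C.[t] * s *+ 2 + E.[t]) * (C^`().[t] * s *+ 2 + E^`().[t]) *+ 2
  - (C^`().[t] * (C.[t] * s ^+ 2 + E.[t] * s + D.[t])
     + C.[t] * (C^`().[t] * s ^+ 2 + E^`().[t] * s + D^`().[t])) *+ 4); first by ring.
by rewrite fs0 f0 ft0; ring.
Qed.

Lemma conic_poly_double_root s y :
  C.[s ^+ 2] * s ^+ 2 + E.[s ^+ 2] * s + D.[s ^+ 2] = 0 ->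
  y ^+ 2 + (C^`().[s ^+ 2] * s ^+ 2 + E^`().[s ^+ 2] * s + D^`().[s ^+ 2]) = 0 ->
  s * y ^+ 2 *+ 2 - (C.[s ^+ 2] * s *+ 2 + E.[s ^+ 2]) = 0 ->
  root conic_poly s /\ root conic_poly^`() s.
Proof.
move=> f0 ft0 fs0; rewrite /root /conic_poly !(derivXn, derivX, derivD, derivM, deriv_comp).
rewrite !(hornerXn, hornerX, hornerC, hornerD, hornerM, hornerMn, horner_comp).
split; apply/eqP; first by rewrite -f0; ring.
transitivity (s * (y ^+ 2 + (C^`().[s ^+ 2] * s ^+ 2 + E^`().[s ^+ 2] * s
  + D^`().[s ^+ 2])) *+ 2 - (s * y ^+ 2 *+ 2 - (C.[s ^+ 2] * s *+ 2 + E.[s ^+ 2])));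
  first by ring.
by rewrite ft0 fs0; ring.
Qed.

Lemma chart_double_root t s z :
  (s ^+ 2 - t) * z ^+ 2 = C.[t] * s ^+ 2 + E.[t] * s + D.[t] ->
  - z ^+ 2 = C^`().[t] * s ^+ 2 + E^`().[t] * s + D^`().[t] ->
  s * z ^+ 2 *+ 2 = C.[t] * s *+ 2 + E.[t] ->
  z = 0 \/ t = s ^+ 2 ->
  (root quad_disc t /\ root quad_disc^`() t)
  \/ (root conic_poly s /\ root conic_poly^`() s).
Proof.
move=> f0 ft0 fs0 [z0 | ts].
  left; apply: (quad_disc_double_root (s := s)).
  - by rewrite -f0 z0; ring.
  - by rewrite -fs0 z0; ring.
  - by rewrite -ft0 z0; ring.
right; rewrite ts in f0 ft0 fs0; apply: (conic_poly_double_root (y := z)).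
- by rewrite -f0; ring.
- by rewrite -ft0; ring.
- by rewrite -fs0; ring.
Qed.

Hypotheses (sizeC : (size C <= 3)%N) (sizeE : (size E <= 4)%N) (sizeD : (size D <= 5)%N).

Lemma size_quad_disc : (size quad_disc <= 7)%N.
Proof.
apply: leq_trans (size_polyD _ _) _; rewrite size_polyN geq_max.
rewrite (leq_size_mul (m := 3) (n := 3)) //=.
exact: leq_trans (size_Mn_leq _ _) (leq_size_mul (m := 2) (n := 4) _ _).
Qed.

Lemma coef_quad_disc_top : quad_disc`_6 = E`_3 * E`_3 - C`_2 * D`_4 *+ 4.
Proof. by rewrite coefB coefMn (coefM_sizes (m := 3) (n := 3)) ?(coefM_sizes (m := 2) (n := 4)). Qed.

Let size_Ccomp : (size ((C \Po 'X^2) * 'X^2)%R <= 7)%N.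
Proof.
apply: (leq_size_mul (m := 4) (n := 2)); last by rewrite size_polyXn.
exact: (size_comp_Xn_leq (n := 2)).
Qed.

Let size_Ecomp : (size ((E \Po 'X^2) * 'X)%R <= 8)%N.
Proof.
apply: (leq_size_mul (m := 6) (n := 1)); last by rewrite size_polyX.
exact: (size_comp_Xn_leq (n := 3)).
Qed.

Let size_Dcomp : (size (D \Po 'X^2) <= 9)%N.
Proof. exact: (size_comp_Xn_leq (n := 4)). Qed.

Lemma size_conic_poly : (size conic_poly <= 9)%N.
Proof.
apply: leq_trans (size_polyD _ _) _; rewrite geq_max size_Dcomp andbT.
by apply: leq_trans (size_polyD _ _) _; rewrite geq_max (leq_trans size_Ccomp) ?(leq_trans size_Ecomp).
Qed.

Lemma coef_conic_poly_top : conic_poly`_8 = D`_4.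
Proof.
have size_Ccomp8 := leq_trans size_Ccomp (isT : (7 <= 8)%N).
by rewrite !coefD coef_comp_poly_Xn // !(nth_default 0 size_Ccomp8, nth_default 0 size_Ecomp) !add0r.
Qed.

End QuadraticFamily.

Lemma map_quad_disc (R S : comNzRingType) (f : {rmorphism R -> S}) (C E D : {poly R}) :
  map_poly f (quad_disc C E D) = quad_disc (map_poly f C) (map_poly f E) (map_poly f D).
Proof. by rewrite rmorphB rmorphMn !rmorphM. Qed.

Lemma map_conic_poly (R S : comNzRingType) (f : {rmorphism R -> S}) (C E D : {poly R}) :
  map_poly f (conic_poly C E D) = conic_poly (map_poly f C) (map_poly f E) (map_poly f D).
Proof. by rewrite !rmorphD !rmorphM /= !map_comp_poly map_polyXn map_polyX. Qed.


Lemma det_mx33 (R : comNzRingType) (A : 'M[R]_3) :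
  \det A = A (inord 0) (inord 0) * (A (inord 1) (inord 1) * A (inord 2) (inord 2)
                                    - A (inord 1) (inord 2) * A (inord 2) (inord 1))
          - A (inord 0) (inord 1) * (A (inord 1) (inord 0) * A (inord 2) (inord 2)
                                    - A (inord 1) (inord 2) * A (inord 2) (inord 0))
          + A (inord 0) (inord 2) * (A (inord 1) (inord 0) * A (inord 2) (inord 1)
                                    - A (inord 1) (inord 1) * A (inord 2) (inord 0)).
Proof.
pose a (i j : nat) := A (inord i) (inord j).
have -> : A = \matrix_(i, j) a i j by apply/matrixP => i j; rewrite mxE /a !inord_val.
rewrite !mxE !inordK //; clearbody a.
rewrite (expand_det_row _ 0) !big_ord_recr big_ord0 /= /cofactor.
rewrite !(expand_det_row _ 0) !big_ord_recr !big_ord0 /= /cofactor !det_mx11 !mxE /=.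
rewrite /bump /=; ring.
Qed.

Lemma mderivXU (R : comNzRingType) n (i j : 'I_n) :
  mderiv i ('X_j : {mpoly R[n]}) = (j == i)%:R.
Proof.
rewrite mderivX mnm1E; case: eqP => [->|_]; last by rewrite scale0r.
have -> : (U_(i) - U_(i) = 0)%MM by apply/mnmP => k; rewrite mnmBE mnm0E subnn.
by rewrite mpolyX0 scale1r.
Qed.

Lemma mderiv_sum (R : comNzRingType) n (j : 'I_n) (I : Type) (s : seq I) (Q : pred I)
    (F : I -> {mpoly R[n]}) :
  mderiv j (\sum_(i <- s | Q i) F i) = \sum_(i <- s | Q i) mderiv j (F i).
Proof. exact: raddf_sum. Qed.

Lemma mderiv_nat (R : comNzRingType) n (i : 'I_n) k :
  mderiv i (k%:R : {mpoly R[n]}) = 0.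
Proof. by rewrite -mpolyC_nat mderivC. Qed.

Lemma mderivXn (R : comNzRingType) n (i : 'I_n) k :
  mderiv i ('X_i ^+ k : {mpoly R[n]}) = 'X_i ^+ k.-1 *+ k.
Proof.
elim: k => [|k IHk]; first by rewrite expr0 -mpolyC1 mderivC mulr0n.
rewrite exprS mderivM IHk mderivXU eqxx mul1r mulrnAr -exprS.
by case: k {IHk} => [|k]; rewrite ?expr0 ?mulr0n ?addr0 // -mulrSr.
Qed.

Lemma mderivXn_neq (R : comNzRingType) n (i j : 'I_n) k : j != i ->
  mderiv i ('X_j ^+ k : {mpoly R[n]}) = 0.
Proof.
move=> /negPf ji; elim: k => [|k IHk]; first by rewrite expr0 -mpolyC1 mderivC.
by rewrite exprS mderivM IHk mderivXU ji mulr0 mul0r addr0.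
Qed.

Section IdealPower.
Variables (R : comNzRingType) (n : nat) (S : pred 'I_n).

Fixpoint in_ideal_pow (r : nat) (P : {mpoly R[n]}) : Prop :=
  if r is r'.+1 then
    exists2 A : 'I_n -> {mpoly R[n]}, P = \sum_(i | S i) 'X_i * A i
                                    & forall i, in_ideal_pow r' (A i)
  else True.

Lemma in_ideal_pow0 r : in_ideal_pow r 0.
Proof.
elim: r => [|r IHr] //=; exists (fun=> 0) => //.
by rewrite big1 // => i _; rewrite mulr0.
Qed.

Lemma in_ideal_powD r P Q :
  in_ideal_pow r P -> in_ideal_pow r Q -> in_ideal_pow r (P + Q).
Proof.
elim: r P Q => [|r IHr] P Q //= [A -> PA] [B -> QB].
exists (fun i => A i + B i); last by move=> i; apply: IHr.
by rewrite -big_split; apply: eq_bigr => i _; rewrite mulrDr.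
Qed.

Lemma in_ideal_pow_sum r (I : Type) (s : seq I) (Q : pred I) (F : I -> {mpoly R[n]}) :
  (forall i, Q i -> in_ideal_pow r (F i)) -> in_ideal_pow r (\sum_(i <- s | Q i) F i).
Proof.
move=> FI; apply: big_ind => //; [exact: in_ideal_pow0 | exact: in_ideal_powD].
Qed.

Lemma in_ideal_powMl r Q P : in_ideal_pow r P -> in_ideal_pow r (Q * P).
Proof.
elim: r P => [|r IHr] P //= [A -> PA].
exists (fun i => Q * A i); last by move=> i; apply: IHr.
by rewrite mulr_sumr; apply: eq_bigr => i _; rewrite mulrCA.
Qed.

Lemma in_ideal_powM r r' P Q :
  in_ideal_pow r P -> in_ideal_pow r' Q -> in_ideal_pow (r + r') (P * Q).
Proof.
elim: r P => [|r IHr] P; first by move=> _ /(in_ideal_powMl P).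
move=> [A -> PA] QI; exists (fun i => A i * Q); last by move=> i; apply: IHr (PA i) QI.
by rewrite mulr_suml; apply: eq_bigr => i _; rewrite mulrA.
Qed.

Lemma in_ideal_powX i : S i -> in_ideal_pow 1 'X_i.
Proof.
move=> Si; exists (fun j => (j == i)%:R) => // .
by rewrite (bigD1 i) //= eqxx mulr1 big1 ?addr0 // => j /andP[_ /negPf ->]; rewrite mulr0.
Qed.

Lemma in_ideal_powXn i k : S i -> in_ideal_pow k ('X_i ^+ k).
Proof.
move=> Si; elim: k => [|k IHk] //.
by rewrite exprS; apply: (in_ideal_powM (r := 1)) (in_ideal_powX Si) IHk.
Qed.

Lemma in_ideal_powSn r P : in_ideal_pow r.+1 P -> in_ideal_pow r P.
Proof.
elim: r P => [|r IHr] P [A -> PA] //=.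
by exists A => // i; apply: IHr.
Qed.

Lemma in_ideal_powMr r P Q : in_ideal_pow r P -> in_ideal_pow r (P * Q).
Proof. by rewrite mulrC; apply: in_ideal_powMl. Qed.

Lemma in_ideal_pow_leq r r' P : (r <= r')%N -> in_ideal_pow r' P -> in_ideal_pow r P.
Proof.
move=> /subnK <-; elim: (r' - r)%N => // k IHk PI.
by apply: IHk; apply: in_ideal_powSn.
Qed.

Lemma in_ideal_pow_mderiv r j P :
  in_ideal_pow r.+1 P -> in_ideal_pow r (mderiv j P).
Proof.
elim: r P => [|r IHr] P // [A -> PA].
rewrite mderiv_sum; apply: in_ideal_pow_sum => i Si.
rewrite mderivM mderivXU; apply: in_ideal_powD; first exact: in_ideal_powMl.
exact: (in_ideal_powM (r := 1)) (in_ideal_powX Si) (IHr _ (PA i)).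
Qed.

Lemma meval_ideal_pow r P (x : 'I_n -> R) :
  (forall i, S i -> x i = 0) -> in_ideal_pow r.+1 P -> meval x P = 0.
Proof.
move=> xS [A -> _]; rewrite raddf_sum big1 // => i Si.
by rewrite /= mevalM mevalXU xS ?mul0r.
Qed.
End IdealPower.

Lemma inord4_eqE (i j : nat) : (i < 4)%N -> (j < 4)%N ->
  (inord i == inord j :> 'I_4) = (i == j).
Proof. by move=> ? ?; rewrite -val_eqE /= !inordK. Qed.

Lemma lift_inord (i k : nat) : (i < 4)%N -> (k < 3)%N ->
  lift (inord i : 'I_4) (inord k : 'I_3) = inord (bump i k).
Proof. by move=> i_lt k_lt; apply: val_inj; rewrite /= !inordK //; rewrite /bump; lia. Qed.

Lemma eq_ord4 (T : Type) (f g : 'I_4 -> T) :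
  (forall k, (k < 4)%N -> f (inord k) = g (inord k)) -> f =1 g.
Proof. by move=> fg i; rewrite -(inord_val i); apply: fg. Qed.

Definition form_poly (R : nzRingType) (b : 'I_12 -> R) (off deg : nat) : {poly R} :=
  \poly_(k < deg.+1) b (inord (off + k)).

Lemma size_form_poly (R : nzRingType) (b : 'I_12 -> R) off deg :
  (size (form_poly b off deg) <= deg.+1)%N.
Proof. exact: size_poly. Qed.

Lemma coef_form_poly (R : nzRingType) (b : 'I_12 -> R) off deg k : (k <= deg)%N ->
  (form_poly b off deg)`_k = b (inord (off + k)).
Proof. by move=> k_le; rewrite coef_poly ltnS k_le. Qed.

Lemma meval_form_poly (F : fieldType) (a : 'I_12 -> F) off deg :
  map_poly (meval a) (form_poly (fun i => 'X_i) off deg) = form_poly a off deg.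
Proof.
by apply/polyP => k; rewrite coef_map /= !coef_poly; case: ifP => _; rewrite ?mevalXU ?meval0.
Qed.

Section BinaryFormValues.
Variables (F : fieldType) (a : 'I_12 -> F) (off deg : nat) (x : 'I_4 -> F).
Local Notation u := (x (inord 0)).
Local Notation v := (x (inord 1)).

Lemma meval_binform_term k :
  meval x ((a (inord (off + k)))%:MP * U_ ^+ k * V_ ^+ (deg - k))
  = a (inord (off + k)) * u ^+ k * v ^+ (deg - k).
Proof. by rewrite !mevalM mevalC !rmorphXn /= /U_ /V_ !mevalXU. Qed.

Lemma meval_binform t : u = t * v ->
  meval x (binform a off deg) = v ^+ deg * (form_poly a off deg).[t].
Proof.
move=> ut; rewrite /binform horner_poly raddf_sum big_distrr /=.
apply: eq_bigr => k _; rewrite meval_binform_term ut exprMn.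
have -> : v ^+ deg = v ^+ k * v ^+ (deg - k) by rewrite -exprD subnKC // -ltnS.
ring.
Qed.

Lemma meval_binform_v0 : v = 0 ->
  meval x (binform a off deg) = a (inord (off + deg)) * u ^+ deg.
Proof.
move=> v0; rewrite /binform raddf_sum big_ord_recr /= big1 ?add0r => [|k _].
  by rewrite meval_binform_term subnn expr0 mulr1.
by rewrite meval_binform_term v0 expr0n subn_eq0 leqNgt ltn_ord mulr0.
Qed.

Lemma meval_mderivU_binform t : u = t * v ->
  meval x (mderiv (inord 0) (binform a off deg))
  = v ^+ deg.-1 * (form_poly a off deg)^`().[t].
Proof.
move=> ut; rewrite /binform /form_poly poly_def mderiv_sum raddf_sum.
rewrite raddf_sum horner_sum big_distrr /=; apply: eq_bigr => k _.
rewrite !mderivM mderivC mderivXn mderivXn_neq ?inord4_eqE //.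
rewrite mul0r add0r mulr0 addr0 derivZ derivXn hornerZ hornerMn hornerXn.
rewrite !mevalM mevalC mevalMn !rmorphXn /= /V_ !mevalXU ut.
case: k => [[|k] k_lt] /=; rewrite ?mulr0n ?mulr0 ?mul0r //.
have -> : v ^+ deg.-1 = v ^+ k * v ^+ (deg - k.+1) by rewrite -exprD; congr (_ ^+ _); lia.
rewrite exprMn; ring.
Qed.

Lemma mderiv_binform_eq0 (i : 'I_4) : (1 < i)%N -> mderiv i (binform a off deg) = 0.
Proof.
move=> i_gt1; have ne_i j : (j <= 1)%N -> inord j != i.
  by move=> j_le1; apply/eqP => /(congr1 val); rewrite /= inordK //; lia.
rewrite /binform mderiv_sum big1 // => k _.
by rewrite !mderivM mderivC /U_ /V_ !mderivXn_neq ?ne_i // !(mulr0, mul0r, addr0).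
Qed.

Lemma binform_in_ideal_pow (S : pred 'I_4) : S (inord 0) -> S (inord 1) ->
  in_ideal_pow S deg (binform a off deg).
Proof.
move=> SU SV; apply: in_ideal_pow_sum => k _; rewrite -mulrA.
apply: in_ideal_powMl; rewrite -[X in in_ideal_pow _ X](subnKC (ltnSE (ltn_ord k))).
by apply: in_ideal_powM; apply: in_ideal_powXn.
Qed.

End BinaryFormValues.

Section Quartic.
Variables (F : fieldType) (a : 'I_12 -> F).
Local Notation cP := (form_poly a 0 2).
Local Notation eP := (form_poly a 3 3).
Local Notation dP := (form_poly a 7 4).

Lemma Kpoly_split : Kpoly a =
  W_ ^+ 2 * Y_ ^+ 2 - U_ * V_ * Y_ ^+ 2 - (c2 a * W_ ^+ 2 + e3 a * W_ + d4 a).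
Proof. by rewrite /Kpoly; ring. Qed.

Lemma mderivU_Kpoly : mderiv (inord 0) (Kpoly a) =
  - (V_ * Y_ ^+ 2) - (mderiv (inord 0) (c2 a) * W_ ^+ 2
                      + mderiv (inord 0) (e3 a) * W_ + mderiv (inord 0) (d4 a)).
Proof.
rewrite /Kpoly /U_ /V_ /W_ /Y_ !(mderivB, mderivD, mderivM) !mderivXU.
by rewrite !inord4_eqE //=; ring.
Qed.

Lemma mderivW_Kpoly : mderiv (inord 2) (Kpoly a) =
  W_ * Y_ ^+ 2 *+ 2 - (c2 a * W_ *+ 2 + e3 a).
Proof.
rewrite /Kpoly /c2 /e3 /d4 !(mderivB, mderivD, mderivM) !mderiv_binform_eq0 ?inordK //.
by rewrite /U_ /V_ /W_ /Y_ !mderivXU !inord4_eqE //=; ring.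
Qed.

Lemma mderivY_Kpoly : mderiv (inord 3) (Kpoly a) = (W_ ^+ 2 - U_ * V_) * Y_ *+ 2.
Proof.
rewrite /Kpoly /c2 /e3 /d4 !(mderivB, mderivD, mderivM) !mderiv_binform_eq0 ?inordK //.
by rewrite /U_ /V_ /W_ /Y_ !mderivXU !inord4_eqE //=; ring.
Qed.

Lemma quad_part_in_ideal_pow (S : pred 'I_4) : S (inord 0) -> S (inord 1) ->
  in_ideal_pow S 2 (c2 a * W_ ^+ 2 + e3 a * W_ + d4 a).
Proof.
move=> SU SV; apply: in_ideal_powD; first apply: in_ideal_powD.
- exact/in_ideal_powMr/binform_in_ideal_pow.
- exact/in_ideal_powMr/(in_ideal_pow_leq (r' := 3))/binform_in_ideal_pow.
- exact/(in_ideal_pow_leq (r' := 4))/binform_in_ideal_pow.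
Qed.

Definition chart_hessian (G : {mpoly F[4]}) (p : 'I_4 -> F) (i : 'I_4) : 'M[F]_3 :=
  \matrix_(j < 3, k < 3) meval (fun l => p l / p i) (mderiv (lift i k) (mderiv (lift i j) G)).

Local Notation kd m j := ((inord m == j :> 'I_4)%:R : F).

Lemma p1_chart : (fun l => p1 l / p1 (inord 3)) =1 @p1 F.
Proof. by move=> l; rewrite {2}/p1 /= inordK // divr1. Qed.

Lemma p2_chart : (fun l => p2 l / p2 (inord 2)) =1 @p2 F.
Proof. by move=> l; rewrite {2}/p2 /= inordK // divr1. Qed.

Lemma meval_mderiv2_Kpoly_p1 (j k : 'I_4) : j != inord 3 -> k != inord 3 ->
  meval p1 (mderiv k (mderiv j (Kpoly a)))
  = (kd 2 j * kd 2 k) *+ 2 - (kd 0 j * kd 1 k + kd 0 k * kd 1 j).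
Proof.
move=> /negPf jY /negPf kY; pose S := [pred l : 'I_4 | l != inord 3].
have p1S l : S l -> p1 l = 0 :> F.
  by rewrite /p1 inE -val_eqE /= inordK // => /negPf ->.
have SX l : (l < 3)%N -> S (inord l) by move=> l_lt; rewrite inE inord4_eqE //; lia.
have fS : in_ideal_pow S 4 (c2 a * W_ ^+ 2 + e3 a * W_ + d4 a).
  apply: in_ideal_powD; first apply: in_ideal_powD.
  - apply: (in_ideal_powM (r := 2)); [apply: binform_in_ideal_pow | apply: in_ideal_powXn];
      exact: SX.
  - apply: (in_ideal_powM (r := 3)); [apply: binform_in_ideal_pow | apply: in_ideal_powX];
      exact: SX.
  - by apply: binform_in_ideal_pow; apply: SX.
rewrite Kpoly_split [in LHS]mderivB [in LHS]mderivB mevalB.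
rewrite (meval_ideal_pow p1S (in_ideal_pow_mderiv _ (in_ideal_pow_mderiv _ fS))) subr0.
rewrite /U_ /V_ /W_ /Y_ !(mderivB, mderivD, mderivM, mderivXU, mderiv_nat).
rewrite ![_ == j]eq_sym ![_ == k]eq_sym jY kY.
by rewrite !(mevalB, mevalD, mevalM, rmorph_nat) !mevalXU /p1 /= !inordK //=; ring.
Qed.

Lemma meval_mderiv2_c2 (x : 'I_4 -> F) (j k : 'I_4) :
  meval x (mderiv k (mderiv j (c2 a)))
  = a (inord 0) * kd 1 j * kd 1 k *+ 2 + a (inord 1) * (kd 0 j * kd 1 k + kd 0 k * kd 1 j)
    + a (inord 2) * kd 0 j * kd 0 k *+ 2.
Proof.
rewrite /c2 /binform !big_ord_recr big_ord0 /= !expr0 !mulr1 add0r /U_ /V_.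
rewrite !(mderivD, mderivM, mderivXU, mderiv_nat, mderivC).
by rewrite !(mevalD, mevalM, mevalC, rmorph_nat, meval0); ring.
Qed.

Lemma meval_mderiv2_Kpoly_p2 (j k : 'I_4) : j != inord 2 -> k != inord 2 ->
  meval p2 (mderiv k (mderiv j (Kpoly a)))
  = (kd 3 j * kd 3 k) *+ 2 - meval p2 (mderiv k (mderiv j (c2 a))).
Proof.
move=> /negPf jW /negPf kW; pose S := [pred l : 'I_4 | l != inord 2].
have p2S l : S l -> p2 l = 0 :> F.
  by rewrite /p2 inE -val_eqE /= inordK // => /negPf ->.
have SU : S (inord 0) by rewrite inE inord4_eqE.
have SV : S (inord 1) by rewrite inE inord4_eqE.
have fS : in_ideal_pow S 3 (e3 a * W_ + d4 a).
  apply: in_ideal_powD; first exact/in_ideal_powMr/(binform_in_ideal_pow _ _ _ SU SV).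
  exact/(in_ideal_pow_leq (r' := 4))/(binform_in_ideal_pow _ _ _ SU SV).
have -> : Kpoly a = W_ ^+ 2 * Y_ ^+ 2 - U_ * V_ * Y_ ^+ 2 - c2 a * W_ ^+ 2 - (e3 a * W_ + d4 a).
  by rewrite /Kpoly; ring.
rewrite [in LHS]mderivB [in LHS]mderivB mevalB.
rewrite (meval_ideal_pow p2S (in_ideal_pow_mderiv _ (in_ideal_pow_mderiv _ fS))) subr0.
rewrite [in LHS]mderivB [in LHS]mderivB mevalB [mderiv j (c2 a * _)]mderivM /W_.
rewrite mderivXn_neq 1?eq_sym ?jW // mulr0 addr0 mderivM mderivXn_neq 1?eq_sym ?kW // mulr0 addr0.
have p2W : p2 (inord 2) = 1 :> F by rewrite /p2 /= inordK.
rewrite mevalM rmorphXn /= mevalXU p2W expr1n mulr1; congr (_ - _).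
rewrite /Y_ /U_ /V_ !(mderivB, mderivD, mderivM, mderivXU, mderiv_nat).
rewrite ![_ == j]eq_sym ![_ == k]eq_sym jW kW.
by rewrite !(mevalB, mevalD, mevalM, rmorph_nat) !mevalXU /p2 /= !inordK //=; ring.
Qed.

Lemma det_chart_hessian_p1 : \det (chart_hessian (Kpoly a) p1 (inord 3)) = - 2%:R.
Proof.
have -> : chart_hessian (Kpoly a) p1 (inord 3) = \matrix_(j < 3, k < 3)
    ((kd 2 (inord j) * kd 2 (inord k)) *+ 2
     - (kd 0 (inord j) * kd 1 (inord k) + kd 0 (inord k) * kd 1 (inord j))).
  apply/matrixP => j k; have lift3 (l : 'I_3) : lift (inord 3) l = inord l.
    by apply: val_inj; rewrite /= !inordK // /bump; case: l => l /= l_lt; lia.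
  by rewrite !mxE !lift3 (meval_eq _ p1_chart) meval_mderiv2_Kpoly_p1 // -lift3 eq_sym neq_lift.
rewrite det_mx33 !mxE !inordK // !inord4_eqE //=.
ring.
Qed.

Lemma det_chart_hessian_p2 : \det (chart_hessian (Kpoly a) p2 (inord 2))
  = - 2%:R * (a (inord 1) * a (inord 1) - a (inord 0) * a (inord 2) *+ 4).
Proof.
have -> : chart_hessian (Kpoly a) p2 (inord 2) = \matrix_(j < 3, k < 3)
    let j' := lift (inord 2) j in let k' := lift (inord 2) k in
    (kd 3 j' * kd 3 k') *+ 2
    - (a (inord 0) * kd 1 j' * kd 1 k' *+ 2 + a (inord 1) * (kd 0 j' * kd 1 k' + kd 0 k' * kd 1 j')
       + a (inord 2) * kd 0 j' * kd 0 k' *+ 2).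
  apply/matrixP => j k; rewrite !mxE (meval_eq _ p2_chart) meval_mderiv2_Kpoly_p2.
  - by rewrite meval_mderiv2_c2.
  - by rewrite eq_sym neq_lift.
  - by rewrite eq_sym neq_lift.
have lift2 m m' : (m < 3)%N -> m' = bump 2 m -> lift (inord 2) (inord m) = inord m' :> 'I_4.
  by move=> m_lt ->; apply: val_inj; rewrite /= !inordK // /bump; lia.
rewrite det_mx33 !mxE /= (lift2 0%N 0%N) // (lift2 1%N 1%N) // (lift2 2%N 3%N) //.
rewrite !inord4_eqE //=.
ring.
Qed.

Lemma singular_point_Kpoly_of_axis x : nonzero_vec x ->
  x (inord 0) = 0 -> x (inord 1) = 0 -> x (inord 2) * x (inord 3) = 0 ->
  singular_point (Kpoly a) x.
Proof.
move=> nz u0 v0 /eqP; rewrite mulf_eq0 => /orP wy0.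
have wy : x (inord 2) = 0 \/ x (inord 3) = 0 by case: wy0 => /eqP; [left | right].
pose S := pred2 (inord 0 : 'I_4) (inord 1).
have xS i : S i -> x i = 0 by case/pred2P => ->.
have SU : S (inord 0) by rewrite /= eqxx.
have SV : S (inord 1) by rewrite /= eqxx orbT.
have fS := quad_part_in_ideal_pow SU SV.
split=> //; rewrite Kpoly_split; split.
  rewrite mevalB (meval_ideal_pow xS fS) subr0 /U_ /V_ /W_ /Y_.
  rewrite !(rmorphXn, mevalB, mevalM) /= !mevalXU u0 v0.
  by case: wy => ->; ring.
move=> i; rewrite mderivB mevalB (meval_ideal_pow xS (in_ideal_pow_mderiv _ fS)) subr0.
rewrite /U_ /V_ /W_ /Y_ !(mderivB, mderivM, mderivXU).
rewrite !(mevalB, mevalD, mevalM, rmorph_nat) !mevalXU u0 v0.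
by case: wy => ->; ring.
Qed.

End Quartic.

Section Evaluations.
Variables (F : fieldType) (a : 'I_12 -> F) (x : 'I_4 -> F).
Local Notation u := (x (inord 0)).
Local Notation v := (x (inord 1)).
Local Notation w := (x (inord 2)).
Local Notation y := (x (inord 3)).

Lemma meval_mderivY_Kpoly : meval x (mderiv (inord 3) (Kpoly a)) = (w ^+ 2 - u * v) * y *+ 2.
Proof.
by rewrite mderivY_Kpoly !(rmorphXn, mevalB, mevalM, mevalMn) /= /U_ /V_ /W_ /Y_ !mevalXU.
Qed.

Section ChartV.
Hypothesis v_neq0 : v != 0.
Let t := u / v.
Let s := w / v.
Let z := y / v.
Let ut : u = t * v. Proof. by rewrite divfK. Qed.
Let ws : w = s * v. Proof. by rewrite divfK. Qed.
Let yz : y = z * v. Proof. by rewrite divfK. Qed.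
Local Notation cP := (form_poly a 0 2).
Local Notation eP := (form_poly a 3 3).
Local Notation dP := (form_poly a 7 4).

Lemma meval_Kpoly_chart : meval x (Kpoly a) =
  v ^+ 4 * ((s ^+ 2 - t) * z ^+ 2 - (cP.[t] * s ^+ 2 + eP.[t] * s + dP.[t])).
Proof.
rewrite /Kpoly !(rmorphXn, mevalB, mevalD, mevalM) /= /c2 /e3 /d4.
rewrite !(meval_binform _ _ _ ut) /U_ /V_ /W_ /Y_ !mevalXU ut ws yz; ring.
Qed.

Lemma meval_mderivU_Kpoly_chart : meval x (mderiv (inord 0) (Kpoly a)) =
  v ^+ 3 * (- z ^+ 2 - (cP^`().[t] * s ^+ 2 + eP^`().[t] * s + dP^`().[t])).
Proof.
rewrite mderivU_Kpoly !(rmorphXn, mevalN, mevalB, mevalD, mevalM) /= /c2 /e3 /d4.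
rewrite !(meval_mderivU_binform _ _ _ ut) /V_ /W_ /Y_ !mevalXU ws yz /=; ring.
Qed.

Lemma meval_mderivW_Kpoly_chart : meval x (mderiv (inord 2) (Kpoly a)) =
  v ^+ 3 * (s * z ^+ 2 *+ 2 - (cP.[t] * s *+ 2 + eP.[t])).
Proof.
rewrite mderivW_Kpoly !(rmorphXn, mevalB, mevalD, mevalM, mevalMn) /= /c2 /e3.
rewrite !(meval_binform _ _ _ ut) /W_ /Y_ !mevalXU ws yz; ring.
Qed.

Lemma meval_mderivY_Kpoly_chart : meval x (mderiv (inord 3) (Kpoly a)) =
  v ^+ 3 * ((s ^+ 2 - t) * z *+ 2).
Proof. by rewrite meval_mderivY_Kpoly ut ws yz; ring. Qed.

Lemma singular_point_chart (two_neq0 : 2%:R != 0 :> F) :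
  singular_point (Kpoly a) x ->
  (root (quad_disc cP eP dP) t /\ root (quad_disc cP eP dP)^`() t)
  \/ (root (conic_poly cP eP dP) s /\ root (conic_poly cP eP dP)^`() s).
Proof.
have cancel_v k (r : F) : v ^+ k * r = 0 -> r = 0.
  by move/eqP; rewrite mulf_eq0 expf_eq0 (negPf v_neq0) andbF => /eqP.
case=> _ [K0 dK0]; move: K0 (dK0 (inord 0)) (dK0 (inord 2)) (dK0 (inord 3)).
rewrite meval_Kpoly_chart meval_mderivU_Kpoly_chart meval_mderivW_Kpoly_chart.
rewrite meval_mderivY_Kpoly_chart => /cancel_v/subr0_eq f0 /cancel_v/subr0_eq ft0.
move=> /cancel_v/subr0_eq fs0 /cancel_v/eqP; rewrite -mulr_natr mulf_eq0.
rewrite (negPf two_neq0) orbF mulf_eq0 subr_eq0 => /orP st_z0.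
apply: chart_double_root f0 ft0 fs0 _.
by case: st_z0 => /eqP; [right | left].
Qed.

End ChartV.

Lemma meval_Kpoly_v0 : v = 0 -> meval x (Kpoly a) =
  w ^+ 2 * y ^+ 2 - (a (inord 2) * u ^+ 2 * w ^+ 2 + a (inord 6) * u ^+ 3 * w
                     + a (inord 11) * u ^+ 4).
Proof.
move=> v0; rewrite /Kpoly !(rmorphXn, mevalB, mevalD, mevalM) /= /c2 /e3 /d4.
by rewrite !(meval_binform_v0 _ _ _ v0) /U_ /V_ /W_ /Y_ !mevalXU v0 /=; ring.
Qed.

Lemma meval_mderivW_Kpoly_v0 : v = 0 -> meval x (mderiv (inord 2) (Kpoly a)) =
  w * y ^+ 2 *+ 2 - (a (inord 2) * u ^+ 2 * w *+ 2 + a (inord 6) * u ^+ 3).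
Proof.
move=> v0; rewrite mderivW_Kpoly !(rmorphXn, mevalB, mevalD, mevalM, mevalMn) /= /c2 /e3.
by rewrite !(meval_binform_v0 _ _ _ v0) /W_ /Y_ !mevalXU /=; ring.
Qed.
End Evaluations.

Section QuarticSingularities.
Variables (F : fieldType) (a : 'I_12 -> F).
Hypothesis two_neq0 : 2%:R != 0 :> F.
Local Notation cP := (form_poly a 0 2).
Local Notation eP := (form_poly a 3 3).
Local Notation dP := (form_poly a 7 4).

Lemma singular_point_v0 x :
  a (inord 6) * a (inord 6) - a (inord 2) * a (inord 11) *+ 4 != 0 ->
  a (inord 11) != 0 ->
  singular_point (Kpoly a) x -> x (inord 1) = 0 -> x (inord 0) = 0.
Proof.
move=> lead_neq0 a11_neq0 [_ [K0 dK0]] v0; move: K0 (dK0 (inord 2)) (dK0 (inord 3)).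
rewrite meval_Kpoly_v0 // meval_mderivW_Kpoly_v0 // meval_mderivY_Kpoly v0 mulr0 subr0.
move=> /subr0_eq f0 /subr0_eq fw0 /eqP; rewrite -mulr_natr mulf_eq0 (negPf two_neq0).
rewrite orbF mulf_eq0 expf_eq0 /= => wy0.
have wy : x (inord 2) = 0 \/ x (inord 3) = 0 by case/orP: wy0 => /eqP; [left | right].
have [disc0 | d0] := sing_wy_quad_disc f0 fw0 wy.
  have : (a (inord 6) * a (inord 6) - a (inord 2) * a (inord 11) *+ 4)
                       * x (inord 0) ^+ 6 = 0 by rewrite -disc0; ring.
  by move/eqP; rewrite mulf_eq0 (negPf lead_neq0) expf_eq0 /= => /eqP.
by move/eqP: d0; rewrite mulf_eq0 (negPf a11_neq0) expf_eq0 /= => /eqP.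
Qed.

Lemma singular_point_Kpoly_axis x :
  a (inord 6) * a (inord 6) - a (inord 2) * a (inord 11) *+ 4 != 0 ->
  a (inord 11) != 0 ->
  (forall t, root (quad_disc cP eP dP) t -> ~~ root (quad_disc cP eP dP)^`() t) ->
  (forall s, root (conic_poly cP eP dP) s -> ~~ root (conic_poly cP eP dP)^`() s) ->
  singular_point (Kpoly a) x ->
  [/\ x (inord 0) = 0, x (inord 1) = 0 & x (inord 2) * x (inord 3) = 0].
Proof.
move=> lead_neq0 a11_neq0 disc_sqfree conic_sqfree sx.
have [v0 | v_neq0] := eqVneq (x (inord 1)) 0; last first.
  by case: (singular_point_chart v_neq0 two_neq0 sx) => -[r r']; [move: (disc_sqfree _ r) | move: (conic_sqfree _ r)]; rewrite r'.
have u0 := singular_point_v0 lead_neq0 a11_neq0 sx v0; split=> //.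
case: sx => _ [_ /(_ (inord 3))]; rewrite meval_mderivY_Kpoly u0 v0 mulr0 subr0.
move/eqP; rewrite -mulr_natr mulf_eq0 (negPf two_neq0) orbF expr2 -mulrA.
by rewrite mulf_eq0 => /orP[/eqP-> | /eqP->]; rewrite ?mul0r ?mulr0.
Qed.

End QuarticSingularities.

Lemma A1_point_of_chart (F : fieldType) (G : {mpoly F[4]}) (p : 'I_4 -> F) (i : 'I_4) :
  singular_point G p -> p i != 0 -> \det (chart_hessian G p i) != 0 -> A1_point G p.
Proof. by move=> sp pi_neq0 det_neq0; split=> //; exists i. Qed.

Lemma same_proj_point_unit (F : fieldType) (x : 'I_4 -> F) (m : nat) : (m < 4)%N ->
  same_proj_point x (fun i => if val i == m then 1 else 0)
  <-> x (inord m) != 0 /\ (forall k, (k < 4)%N -> k != m -> x (inord k) = 0).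
Proof.
move=> m_lt; split=> [[l l_neq0 xl] | [xm_neq0 xk0]].
  split=> [|k k_lt km]; rewrite xl /= inordK //; first by rewrite eqxx mulr1.
  by rewrite (negPf km) mulr0.
exists (x (inord m)) => //; apply: eq_ord4 => k k_lt; rewrite /= inordK //.
by case: eqP => [-> | /eqP km]; rewrite ?mulr1 ?mulr0 //; apply: xk0.
Qed.

Section ProjectiveAxis.
Variables (F : fieldType) (x : 'I_4 -> F).

Lemma axis_same_proj_point : nonzero_vec x ->
  x (inord 0) = 0 -> x (inord 1) = 0 -> x (inord 2) * x (inord 3) = 0 ->
  same_proj_point x p1 \/ same_proj_point x p2.
Proof.
move=> [i xi_neq0] u0 v0 /eqP; rewrite mulf_eq0 => /orP[/eqP w0 | /eqP y0].
  left; apply/same_proj_point_unit => //; split=> [|k k_lt k_neq3].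
    apply: contraNneq xi_neq0 => y0; apply/eqP; rewrite -(inord_val i).
    by case: i => -[|[|[|[|k]]]].
  by case: k k_lt k_neq3 => [|[|[|[|k]]]].
right; apply/same_proj_point_unit => //; split=> [|k k_lt k_neq2].
  apply: contraNneq xi_neq0 => w0; apply/eqP; rewrite -(inord_val i).
  by case: i => -[|[|[|[|k]]]].
by case: k k_lt k_neq2 => [|[|[|[|k]]]].
Qed.

Lemma same_proj_point_axis : same_proj_point x p1 \/ same_proj_point x p2 ->
  [/\ nonzero_vec x, x (inord 0) = 0, x (inord 1) = 0 & x (inord 2) * x (inord 3) = 0].
Proof.
case=> /same_proj_point_unit[// | xm_neq0 xk0].
  by split; [exists (inord 3) | apply: xk0 | apply: xk0 | rewrite xk0 ?mul0r].
by split; [exists (inord 2) | apply: xk0 | apply: xk0 | rewrite [x (inord 3)]xk0 ?mulr0].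
Qed.

End ProjectiveAxis.

Section GenericQuartic.
Variables (F : fieldType) (a : 'I_12 -> F).
Hypothesis two_neq0 : 2%:R != 0 :> F.
Local Notation cP := (form_poly a 0 2).
Local Notation eP := (form_poly a 3 3).
Local Notation dP := (form_poly a 7 4).

Lemma singular_point_Kpoly (x : 'I_4 -> F) :
  a (inord 6) * a (inord 6) - a (inord 2) * a (inord 11) *+ 4 != 0 ->
  a (inord 11) != 0 ->
  (forall t, root (quad_disc cP eP dP) t -> ~~ root (quad_disc cP eP dP)^`() t) ->
  (forall s, root (conic_poly cP eP dP) s -> ~~ root (conic_poly cP eP dP)^`() s) ->
  singular_point (Kpoly a) x <-> same_proj_point x p1 \/ same_proj_point x p2.
Proof.
move=> lead_neq0 a11_neq0 disc_sqfree conic_sqfree; split=> [sx | /same_proj_point_axis[]].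
  have [u0 v0 wy0] := singular_point_Kpoly_axis two_neq0 lead_neq0 a11_neq0
                        disc_sqfree conic_sqfree sx.
  by apply: axis_same_proj_point; first by case: sx.
exact: singular_point_Kpoly_of_axis.
Qed.

Lemma A1_point_p1 : A1_point (Kpoly a) p1.
Proof.
have p1E k : (k < 4)%N -> p1 (inord k) = (k == 3)%:R :> F by move=> ?; rewrite /p1 /= inordK //; case: (k == 3)%N.
apply: (A1_point_of_chart (i := inord 3)).
- apply: singular_point_Kpoly_of_axis; rewrite ?p1E ?mul0r //.
  by exists (inord 3); rewrite p1E // oner_neq0.
- by rewrite p1E // oner_neq0.
- by rewrite det_chart_hessian_p1 oppr_eq0.
Qed.

Lemma A1_point_p2 : a (inord 1) * a (inord 1) - a (inord 0) * a (inord 2) *+ 4 != 0 ->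
  A1_point (Kpoly a) p2.
Proof.
move=> disc_c2_neq0.
have p2E k : (k < 4)%N -> p2 (inord k) = (k == 2)%:R :> F by move=> ?; rewrite /p2 /= inordK //; case: (k == 2)%N.
apply: (A1_point_of_chart (i := inord 2)).
- apply: singular_point_Kpoly_of_axis; rewrite ?p2E ?mulr0 //.
  by exists (inord 2); rewrite p2E // oner_neq0.
- by rewrite p2E // oner_neq0.
- by rewrite det_chart_hessian_p2 mulf_neq0 ?oppr_eq0.
Qed.

End GenericQuartic.

Definition Kdisc (R : comNzRingType) (b : 'I_12 -> R) : {poly R} :=
  quad_disc (form_poly b 0 2) (form_poly b 3 3) (form_poly b 7 4).

Definition Kconic (R : comNzRingType) (b : 'I_12 -> R) : {poly R} :=
  conic_poly (form_poly b 0 2) (form_poly b 3 3) (form_poly b 7 4).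

Section KdiscKconic.
Variables (R : comNzRingType) (b : 'I_12 -> R).

Lemma size_Kdisc : (size (Kdisc b) <= 7)%N.
Proof. by apply: size_quad_disc; apply: size_form_poly. Qed.

Lemma coef_Kdisc :
  (Kdisc b)`_6 = b (inord 6) * b (inord 6) - b (inord 2) * b (inord 11) *+ 4.
Proof. by rewrite coef_quad_disc_top ?size_form_poly // !coef_form_poly. Qed.

Lemma size_Kconic : (size (Kconic b) <= 9)%N.
Proof. by apply: size_conic_poly; apply: size_form_poly. Qed.

Lemma coef_Kconic : (Kconic b)`_8 = b (inord 11).
Proof. by rewrite coef_conic_poly_top ?size_form_poly // coef_form_poly. Qed.

End KdiscKconic.

Local Notation Xs := (fun i : 'I_12 => 'X_i).

Lemma meval_Kdisc (F : fieldType) (a : 'I_12 -> F) :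
  map_poly (meval a) (Kdisc Xs) = Kdisc a.
Proof. by rewrite map_quad_disc !meval_form_poly. Qed.

Lemma meval_Kconic (F : fieldType) (a : 'I_12 -> F) :
  map_poly (meval a) (Kconic Xs) = Kconic a.
Proof. by rewrite map_conic_poly !meval_form_poly. Qed.

Definition genericity_poly (F : fieldType) : {mpoly F[12]} :=
  ('X_(inord 1) * 'X_(inord 1) - 'X_(inord 0) * 'X_(inord 2) *+ 4) * (Kdisc Xs)`_6
  * 'X_(inord 11) * resultant (Kdisc Xs) (Kdisc Xs)^`()
  * resultant (Kconic Xs) (Kconic Xs)^`().

Lemma genericity_poly_spec (F : fieldType) (a : 'I_12 -> F) : [pchar F] =i pred0 ->
  meval a (genericity_poly F) != 0 ->
  [/\ a (inord 1) * a (inord 1) - a (inord 0) * a (inord 2) *+ 4 != 0,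
      a (inord 6) * a (inord 6) - a (inord 2) * a (inord 11) *+ 4 != 0,
      a (inord 11) != 0,
      forall t, root (Kdisc a) t -> ~~ root (Kdisc a)^`() t &
      forall s, root (Kconic a) s -> ~~ root (Kconic a)^`() s].
Proof.
move=> charF0; have natf_neq0 n : (n%:R != 0 :> F) = (n != 0)%N.
  by rewrite ((pcharf0P F).1 charF0).
rewrite /genericity_poly !mevalM !mulf_eq0 !negb_or.
move=> /andP[/andP[/andP[/andP[c_neq0 lead_neq0] a11_neq0] disc_res] conic_res].
move: a11_neq0; rewrite /= mevalXU => a11_neq0.
split=> //.
- by move: c_neq0; rewrite /= !(mevalB, mevalM, mevalMn) /= !mevalXU.
- by move: lead_neq0; rewrite coef_Kdisc /= !(mevalB, mevalM, mevalMn) /= !mevalXU.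
- move=> t; rewrite -meval_Kdisc deriv_map.
  apply: (coef_root_resultant (m := 6) (n := 5)) => //.
  by rewrite coef_deriv rmorphMn -mulr_natr mulf_neq0 ?natf_neq0.
- move=> s; rewrite -meval_Kconic deriv_map.
  apply: (coef_root_resultant (m := 8) (n := 7)) => //; first by rewrite coef_Kconic /= mevalXU.
  by rewrite coef_deriv rmorphMn coef_Kconic /= mevalXU -mulr_natr mulf_neq0 ?natf_neq0.
Qed.

Lemma form_polyE (R : nzRingType) (b : 'I_12 -> R) off deg :
  form_poly b off deg = \sum_(k < deg.+1) (b (inord (off + k)))%:P * 'X^k.
Proof. by rewrite /form_poly poly_def; apply: eq_bigr => k _; rewrite mul_polyC. Qed.

Section Witnesses.
Variable F : fieldType.

Definition wit (s : seq F) : 'I_12 -> F := fun i => nth 0 s i.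

Lemma Kdisc_wit : Kdisc (wit [:: 1; 0; 0; 0; 0; 0; 1; -1]) = 'X^6 + (4%:R)%:P.
Proof.
rewrite /Kdisc /quad_disc !form_polyE !big_ord_recr !big_ord0 /= /wit !inordK //=.
rewrite polyC_natr !(polyC0, polyC1, polyCN); ring.
Qed.

Lemma Kconic_wit : Kconic (wit [:: 0; 0; 0; 0; 0; 0; 0; -1; 0; 0; 0; 1]) = 'X^8 + (-1)%:P.
Proof.
rewrite /Kconic /conic_poly !form_polyE !big_ord_recr !big_ord0.
rewrite !(comp_Xn_poly, comp_polyD, comp_polyM, comp_polyC) /= /wit !inordK //=.
rewrite !(polyC0, polyC1, polyCN); ring.
Qed.

End Witnesses.

Lemma mpoly_neq0_meval (R : comNzRingType) n (x : 'I_n -> R) (P : {mpoly R[n]}) :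
  meval x P != 0 -> P != 0.
Proof. by apply: contraNneq => ->; rewrite meval0. Qed.

Lemma genericity_poly_neq0 (F : closedFieldType) : [pchar F] =i pred0 ->
  genericity_poly F != 0.
Proof.
move=> charF0; have natf_neq0 n : (n%:R != 0 :> F) = (n != 0)%N.
  by rewrite ((pcharf0P F).1 charF0).
pose w1 : 'I_12 -> F := wit [:: 0; 1; 0; 0; 0; 0; 1; 0; 0; 0; 0; 1].
pose wD : 'I_12 -> F := wit [:: 1; 0; 0; 0; 0; 0; 1; -1].
pose wQ : 'I_12 -> F := wit [:: 0; 0; 0; 0; 0; 0; 0; -1; 0; 0; 0; 1].
rewrite /genericity_poly !mulf_neq0 //.
- apply: (mpoly_neq0_meval (x := w1)).
  by rewrite /= !(mevalB, mevalM, mevalMn) /= !mevalXU /w1 /wit !inordK //= mul1r mul0r mul0rn subr0 oner_neq0.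
- apply: (mpoly_neq0_meval (x := w1)).
  by rewrite coef_Kdisc /= !(mevalB, mevalM, mevalMn) /= !mevalXU /w1 /wit !inordK //= mul1r mul0r mul0rn subr0 oner_neq0.
- by apply: (mpoly_neq0_meval (x := w1)); rewrite /= mevalXU /w1 /wit inordK //= oner_neq0.
- apply: (resultant_coef_neq0 (f := meval wD) (m := 6) (n := 5)).
  + exact: size_Kdisc.
  + exact: size_deriv_leq (size_Kdisc _).
  + by rewrite -coef_map meval_Kdisc Kdisc_wit coefD coefXn coefC /= addr0 oner_neq0.
  + rewrite -coef_map -deriv_map meval_Kdisc Kdisc_wit derivD derivXn derivC addr0.
    by rewrite coefMn coefXn eqxx mulr1n natf_neq0.
  + by move=> x; rewrite -deriv_map meval_Kdisc Kdisc_wit; apply: XnDC_no_double_root; rewrite ?natf_neq0.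
- apply: (resultant_coef_neq0 (f := meval wQ) (m := 8) (n := 7)).
  + exact: size_Kconic.
  + exact: size_deriv_leq (size_Kconic _).
  + by rewrite -coef_map meval_Kconic Kconic_wit coefD coefXn coefC /= addr0 oner_neq0.
  + rewrite -coef_map -deriv_map meval_Kconic Kconic_wit derivD derivXn derivC addr0.
    by rewrite coefMn coefXn eqxx mulr1n natf_neq0.
  + move=> x; rewrite -deriv_map meval_Kconic Kconic_wit; apply: XnDC_no_double_root.
    by rewrite natf_neq0.
    by rewrite oppr_eq0 oner_neq0.
Qed.

Theorem lemma4p5 (F : closedFieldType) (charF0 : [pchar F] =i pred0) :
  exists2 D : {mpoly F[12]}, D != 0 &
    forall a : 'I_12 -> F, meval a D != 0 ->
      (forall p : 'I_4 -> F, singular_point (Kpoly a) p <->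
         (same_proj_point p p1 \/ same_proj_point p p2)) /\
      A1_point (Kpoly a) p1 /\ A1_point (Kpoly a) p2.
Proof.
have two_neq0 : 2%:R != 0 :> F by rewrite ((pcharf0P F).1 charF0).
exists (genericity_poly F); first exact: genericity_poly_neq0.
move=> a /(genericity_poly_spec charF0)[c2_disc_neq0 lead_neq0 a11_neq0 disc_sqfree conic_sqfree].
split; first by move=> p; apply: singular_point_Kpoly.
by split; [apply: A1_point_p1 | apply: A1_point_p2].
Qed.
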